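(* Consider $\min_{x\in\mathbb R^n}\varphi(x):=\frac1N\sum_{i=1}^Nf_i(x)+g(x)$ with $g$ proper, convex and lsc, and each $f_i$ differentiable with $L_{f_i}$-Lipschitz gradient and $\mu_{f_i}$-strongly convex ($\mu_{f_i}>0$); let $x^\star$ be the unique minimizer of $\varphi$, and let $(z^k)$ be generated by the Finito/MISO algorithm below. (a) Under the randomized sampling requirement, for all $k$: $\mathbb E[\varphi(z^k)-\min\varphi]\le(\varphi(x^{\mathrm{init}})-\min\varphi)(1-c)^k$ and $\frac12\mathbb E[\|z^k-x^\star\|^2]\le\frac{N(\varphi(x^{\mathrm{init}})-\min\varphi)}{\sum_i\mu_{f_i}}(1-c)^k$, where $c=\min_i\{\xi_ip_i/\gamma_i\}/\max_i\{(N-\gamma_i\mu_{f_i})/(\gamma_i^2\mu_{f_i})\}$ and $\xi_i=\frac{N-\gamma_iL_{f_i}}N$. If $\kappa_i:=L_{f_i}/\mu_{f_i}>1$ and $\gamma_i=\frac N{\mu_{f_i}}(1-\sqrt{1-1/\kappa_i})$, $p_i=\frac{(\sqrt{\kappa_i}+\sqrt{\kappa_i-1})^2}{\sum_j(\sqrt{\kappa_j}+\sqrt{\kappa_j-1})^2}$, the same holds with $c=1/\sum_i(\sqrt{\kappa_i}+\sqrt{\kappa_i-1})^2$. (b) Under shuffled cyclic sampling $I^{k+1}=\{\pi_{\lfloor k/N\rfloor}(\mathrm{mod}(k,N)+1)\}$ (permutations $\pi_\nu$ of $[N]$; includes the cyclic rule), for all $\nu\in\mathbb N$ surely: $\varphi(z^{\nu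 N})-\min\varphi\le(\varphi(x^{\mathrm{init}})-\min\varphi)(1-c)^\nu$ and $\frac12\|z^{\nu N}-x^\star\|^2\le\frac{N(\varphi(x^{\mathrm{init}})-\min\varphi)}{\sum_i\mu_{f_i}}(1-c)^\nu$, with $c=\frac{\delta(1-\Delta)}{N(2-\delta)^2(1-\delta)}$, $\delta=\min_i\frac{\gamma_i\mu_{f_i}}N$, $\Delta=\max_i\frac{\gamma_iL_{f_i}}N$.
   Context: Finito/MISO algorithm: choose $x^{\mathrm{init}}\in\mathbb R^n$ and $\gamma_i\in(0,N/L_{f_i})$; set $\hat\gamma=(\sum_i\gamma_i^{-1})^{-1}$, $s_i=x^{\mathrm{init}}-\frac{\gamma_i}N\nabla f_i(x^{\mathrm{init}})$ for $i\in[N]$, and $\hat s=\hat\gamma\sum_i\gamma_i^{-1}s_i$. At iteration $k=0,1,\dots$: select $I^{k+1}\subseteq[N]$; set $z^k=\operatorname{prox}_{\hat\gamma g}(\hat s)$; for each $i\in I^{k+1}$: $v=z^k-\frac{\gamma_i}N\nabla f_i(z^k)$, $\hat s\leftarrow\hat s+\frac{\hat\gamma}{\gamma_i}(v-s_i)$, $s_i\leftarrow v$. Here $\operatorname{prox}_{tg}(u)=\arg\min_w\{g(w)+\frac1{2t}\|w-u\|^2\}$. Randomized sampling requirement: there exist $p_1,\dots,p_N>0$ such that at every iteration, conditionally on the past, $\mathbb P(i\in I^{k+1})\ge p_i$ for all $i$. $\mathbb E$ denotes (unconditional) expectation. *)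

From mathcomp Require Import all_boot all_fingroup.
From Stdlib Require Import Reals.
Set Implicit Arguments. Unset Strict Implicit. Unset Printing Implicit Defensive.
Open Scope R_scope.

Definition vec (n : nat) := 'I_n -> R.
Definition vadd n (x y : vec n) : vec n := fun j => x j + y j.
Definition vsub n (x y : vec n) : vec n := fun j => x j - y j.
Definition vscale n (a : R) (x : vec n) : vec n := fun j => a * x j.
Definition inner n (x y : vec n) : R := \big[Rplus/0]_(j < n) (x j * y j).
Definition norm2 n (x : vec n) : R := inner x x.
Definition norm n (x : vec n) : R := sqrt (norm2 x).

Definition is_gradient n (f : vec n -> R) (G : vec n -> vec n) : Prop :=
  forall x eps, 0 < eps -> exists delta, 0 < delta /\
    forall h, norm h < delta ->
      Rabs (f (vadd x h) - f x - inner (G x) h) <= eps * norm h.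

Definition lipschitz_map n (L : R) (G : vec n -> vec n) : Prop :=
  forall x y, norm (vsub (G x) (G y)) <= L * norm (vsub x y).

(* mu-strong convexity (mu > 0 is required separately) *)
Definition strongly_convex n (mu : R) (f : vec n -> R) : Prop :=
  forall x y t, 0 <= t <= 1 ->
    f (vadd (vscale t x) (vscale (1 - t) y))
      <= t * f x + (1 - t) * f y - mu / 2 * t * (1 - t) * norm2 (vsub x y).

(* ---------- nonsmooth part: extended-real valued g : R^n -> R u {+oo} ----------
   g x = None encodes g x = +oo; values -oo are excluded by the type. *)
Definition proper_fun n (g : vec n -> option R) : Prop := exists x, g x <> None.

Definition convex_ext n (g : vec n -> option R) : Prop :=
  forall x y t a b, 0 <= t <= 1 -> g x = Some a -> g y = Some b ->
    exists c, g (vadd (vscale t x) (vscale (1 - t) y)) = Some c /\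
              c <= t * a + (1 - t) * b.

Definition ext_gt (a : R) (v : option R) : Prop :=
  match v with Some r => a < r | None => True end.

Definition lsc_ext n (g : vec n -> option R) : Prop :=
  forall x a, ext_gt a (g x) -> exists delta, 0 < delta /\
    forall y, norm (vsub y x) < delta -> ext_gt a (g y).

Definition is_prox n (t : R) (g : vec n -> option R) (u w : vec n) : Prop :=
  exists gw, g w = Some gw /\
    forall v gv, g v = Some gv ->
      gw + / (2 * t) * norm2 (vsub w u) <= gv + / (2 * t) * norm2 (vsub v u).

Definition sumI N (F : 'I_N -> R) : R := \big[Rplus/0]_(i < N) F i.

Definition phi n N (f : 'I_N -> vec n -> R) (g : vec n -> option R) (x : vec n)
  : option R :=
  match g x with Some r => Some (/ INR N * sumI (fun i => f i x) + r) | None => None end.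

(* real value of phi; only ever evaluated at points of dom g *)
Definition phiR n N (f : 'I_N -> vec n -> R) (g : vec n -> option R) (x : vec n) : R :=
  match phi f g x with Some r => r | None => 0 end.

Definition is_minimizer n N (f : 'I_N -> vec n -> R) (g : vec n -> option R)
  (xs : vec n) : Prop :=
  exists ms, phi f g xs = Some ms /\
    forall x v, phi f g x = Some v -> ms <= v.

(* min / max over a finite index set (meaningful for N > 0) *)
Definition minI N (F : 'I_N -> R) : R :=
  match [seq F i | i <- enum 'I_N] with [::] => 0 | a :: l => foldr Rmin a l end.
Definition maxI N (F : 'I_N -> R) : R :=
  match [seq F i | i <- enum 'I_N] with [::] => 0 | a :: l => foldr Rmax a l end.

(* state: (s_1..s_N, s_hat) *)
Definition fstate n N := (('I_N -> vec n) * vec n)%type.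

Definition gamhat N (gam : 'I_N -> R) : R := / sumI (fun i => / gam i).

Definition finito_init n N (gam : 'I_N -> R) (df : 'I_N -> vec n -> vec n)
  (xinit : vec n) : fstate n N :=
  let s := fun i => vsub xinit (vscale (gam i / INR N) (df i xinit)) in
  (s, vscale (gamhat gam)
        (fun j => sumI (fun i => / gam i * s i j))).

Definition finito_step n N (gam : 'I_N -> R) (df : 'I_N -> vec n -> vec n)
  (prox : vec n -> vec n) (st : fstate n N) (I : {set 'I_N}) : fstate n N :=
  let s := st.1 in let sh := st.2 in
  let z := prox sh in
  let v := fun i => vsub z (vscale (gam i / INR N) (df i z)) in
  ((fun i => if i \in I then v i else s i),
   vadd sh (fun j => \big[Rplus/0]_(i < N | i \in I)
                       (gamhat gam / gam i * (v i j - s i j)))).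

Definition finito_state n N gam df prox (xinit : vec n) (h : seq {set 'I_N})
  : fstate n N := foldl (finito_step gam df prox) (finito_init gam df xinit) h.

(* z^k = prox_{gamhat g}(s_hat) computed after the history I^1..I^k *)
Definition finito_z n N gam df (prox : vec n -> vec n) xinit (h : seq {set 'I_N})
  : vec n := prox (finito_state (N := N) gam df prox xinit h).2.

(* ---------- randomized sampling ----------
   q h S = probability that I^{k+1} = S given the past selections h = I^1..I^k.
   E_k[F] = expectation of F(I^1..I^k) under the process started from history h. *)
Fixpoint expect N (q : seq {set 'I_N} -> {set 'I_N} -> R) (k : nat)
  (h : seq {set 'I_N}) (F : seq {set 'I_N} -> R) : R :=
  match k with
  | O => F h
  | S k' => \big[Rplus/0]_(S : {set 'I_N}) (q h S * expect q k' (rcons h S) F)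
  end.

Definition sampling_kernel N (q : seq {set 'I_N} -> {set 'I_N} -> R) : Prop :=
  (forall h S, 0 <= q h S) /\
  (forall h, \big[Rplus/0]_(S : {set 'I_N}) q h S = 1).

Definition sampling_lower_bound N (q : seq {set 'I_N} -> {set 'I_N} -> R)
  (p : 'I_N -> R) : Prop :=
  forall h i, p i <= \big[Rplus/0]_(S : {set 'I_N} | i \in S) q h S.

(* ---------- shuffled cyclic sampling ----------
   I^{k+1} = { pi_{floor(k/N)} (mod(k,N)+1) }  (0-based: pi_{k/N}(k mod N)) *)
Definition shuffled_set N (pi : nat -> {perm 'I_N}) (k : nat) : {set 'I_N} :=
  pi (k %/ N)%N @: [set i : 'I_N | nat_of_ord i == (k %% N)%N].

Definition shuffled_hist N (pi : nat -> {perm 'I_N}) (k : nat) : seq {set 'I_N} :=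
  [seq shuffled_set pi j | j <- iota 0 k].

(* The proof is a Lyapunov argument.  The Finito state (s_i, s_hat) is a
   function of the anchor points u_i, the last points at which the component
   f_i was linearized.  For anchors u let
     M_u(x) = g(x) + sum_i [ f_i(u_i)/N + <grad f_i(u_i), x-u_i>/N
                             + ||x-u_i||^2/(2 gam_i) ],
   a strongly convex model of phi whose minimizer is z(u) = prox(s_hat(u)),
   and let V(u) = M_u(z(u)).  Four inequalities drive everything:
   - phi(z(u)) <= V(u)                                  (descent lemma);
   - V(u) - phi_star <= sum_i beta_i ||z(u)-u_i||^2     (strong convexity);
   - refreshing the anchors in I decreases V by at least
     sum_{i in I} alpha_i ||z(u)-u_i||^2 + ||z(u)-z(u')||^2/(2 gam_hat);
   - V(u_init) <= phi(x_init), and phi(x) - phi_star >= (sum mu)/(2N) ||x-x_star||^2.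
   Randomized sampling: the second and third give, for every admissible r
   (r beta_i <= alpha_i p_i), E[V' - phi_star] <= (1-r) (V - phi_star); both
   constants of part (a) are admissible.  Shuffled sampling: in one epoch
   every anchor is refreshed, so telescoping the decrease bounds
   ||z - u_i||^2 at the end of the epoch and V - phi_star contracts by 1-c. *)

From HB Require Import structures.
From mathcomp Require Import all_boot all_fingroup.
From Stdlib Require Import Reals Lra Lia Psatz FunctionalExtensionality.
Open Scope R_scope.
Set Implicit Arguments. Unset Strict Implicit.

(* Real addition as a commutative monoid, so that the bigop lemmas apply. *)
Lemma Rplus_associative : associative Rplus. Proof. by move=> *; rewrite Rplus_assoc. Qed.
HB.instance Definition _ :=
  Monoid.isComLaw.Build R 0 Rplus Rplus_associative Rplus_comm Rplus_0_l.

Section Sums.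
Variables (I : finType) (P : pred I).

Lemma sumR_add (F G : I -> R) :
  \big[Rplus/0]_(i | P i) (F i + G i)
  = \big[Rplus/0]_(i | P i) F i + \big[Rplus/0]_(i | P i) G i.
Proof. exact: big_split. Qed.

Lemma sumR_scal (c : R) (F : I -> R) :
  \big[Rplus/0]_(i | P i) (c * F i) = c * \big[Rplus/0]_(i | P i) F i.
Proof.
elim/big_rec2: _ => [|i y1 y2 _ ->]; first by rewrite Rmult_0_r.
by rewrite Rmult_plus_distr_l.
Qed.

Lemma sumR_scal_r (c : R) (F : I -> R) :
  \big[Rplus/0]_(i | P i) (F i * c) = (\big[Rplus/0]_(i | P i) F i) * c.
Proof. rewrite Rmult_comm -sumR_scal; apply: eq_bigr => i _; ring. Qed.

Lemma sumR_opp (F : I -> R) :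
  \big[Rplus/0]_(i | P i) (- F i) = - \big[Rplus/0]_(i | P i) F i.
Proof.
elim/big_rec2: _ => [|i y1 y2 _ ->]; first by rewrite Ropp_0.
by rewrite Ropp_plus_distr.
Qed.

Lemma sumR_sub (F G : I -> R) :
  \big[Rplus/0]_(i | P i) (F i - G i)
  = \big[Rplus/0]_(i | P i) F i - \big[Rplus/0]_(i | P i) G i.
Proof. by rewrite sumR_add sumR_opp. Qed.

Lemma sumR_le (F G : I -> R) :
  (forall i, P i -> F i <= G i) ->
  \big[Rplus/0]_(i | P i) F i <= \big[Rplus/0]_(i | P i) G i.
Proof.
move=> H; elim/big_rec2: _ => [|i y1 y2 Pi Hy]; first lra.
have := H i Pi; lra.
Qed.

Lemma sumR_ge0 (F : I -> R) :
  (forall i, P i -> 0 <= F i) -> 0 <= \big[Rplus/0]_(i | P i) F i.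
Proof.
move=> H; elim/big_rec: _ => [|i y Pi Hy]; first lra.
have := H i Pi; lra.
Qed.

End Sums.

Lemma sumR_ge_term (I : finType) (F : I -> R) i0 :
  (forall i, 0 <= F i) -> F i0 <= \big[Rplus/0]_(i : I) F i.
Proof.
move=> H; rewrite (bigD1 i0) //=.
have := @sumR_ge0 _ (fun i => i != i0) F (fun i _ => H i); lra.
Qed.

(* Push scalars, opposites and sums inside a big sum, so that identities
   between sums reduce to pointwise ring identities. *)
Ltac sumfold := rewrite /Rminus /Rdiv;
  repeat (rewrite -sumR_scal || rewrite -sumR_scal_r || rewrite -sumR_opp
          || rewrite -sumR_add).

Section Vec.
Variable n : nat.
Implicit Types x y z a b d : vec n.

Lemma norm2_ge0 x : 0 <= norm2 x.
Proof. apply: sumR_ge0 => j _; nra. Qed.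

Lemma norm_ge0 x : 0 <= norm x.
Proof. exact: sqrt_pos. Qed.

Lemma inner_vscale_r t x y : inner x (vscale t y) = t * inner x y.
Proof. rewrite /inner; sumfold; apply: eq_bigr => j _; rewrite /vscale; ring. Qed.

Lemma inner_vsub_l x y d : inner (vsub x y) d = inner x d - inner y d.
Proof. rewrite /inner -sumR_sub; apply: eq_bigr => j _; rewrite /vsub; ring. Qed.

Lemma norm2_vscale t x : norm2 (vscale t x) = t * t * norm2 x.
Proof. rewrite /norm2 /inner; sumfold; apply: eq_bigr => j _; rewrite /vscale; ring. Qed.

Lemma norm_vscale t x : norm (vscale t x) = Rabs t * norm x.
Proof.
rewrite /norm norm2_vscale sqrt_mult_alt; last by nra.
by rewrite sqrt_Rsqr_abs.
Qed.

Lemma norm2_zero : norm2 (fun _ : 'I_n => 0) = 0.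
Proof. rewrite /norm2 /inner big1 // => j _; ring. Qed.

Lemma vsub_self x : vsub x x = fun _ => 0.
Proof. apply: functional_extensionality => j; rewrite /vsub; ring. Qed.

Lemma inner_zero_r x : inner x (fun _ => 0) = 0.
Proof. rewrite /inner big1 // => j _; ring. Qed.

Lemma norm2_vsub_sym a b : norm2 (vsub a b) = norm2 (vsub b a).
Proof. rewrite /norm2 /inner; apply: eq_bigr => j _; rewrite /vsub; ring. Qed.

Lemma norm2_split x z sh :
  norm2 (vsub x sh) =
  norm2 (vsub z sh) + 2 * inner (vsub z sh) (vsub x z) + norm2 (vsub x z).
Proof. rewrite /norm2 /inner; sumfold; apply: eq_bigr => j _; rewrite /vsub; ring. Qed.

Lemma norm2_conv x z sh s :
  norm2 (vsub (vadd (vscale s x) (vscale (1 - s) z)) sh) =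
  norm2 (vsub z sh) + 2 * s * inner (vsub z sh) (vsub x z) + s * s * norm2 (vsub x z).
Proof.
rewrite /norm2 /inner; sumfold; apply: eq_bigr => j _.
rewrite /vsub /vadd /vscale; ring.
Qed.

Lemma norm2_add_le a b t : 0 < t ->
  norm2 (vadd a b) <= (1 + t) * norm2 a + (1 + / t) * norm2 b.
Proof.
move=> ht; rewrite /norm2 /inner; sumfold; apply: sumR_le => j _; rewrite /vadd.
have : 0 <= (t * a j - b j) * (t * a j - b j) / t.
  apply: Rmult_le_pos; [exact: Rle_0_sqr | apply: Rlt_le; exact: Rinv_0_lt_compat].
have -> : (t * a j - b j) * (t * a j - b j) / t
          = t * (a j * a j) - 2 * (a j * b j) + / t * (b j * b j) by field; lra.
nra.
Qed.

(* Cauchy-Schwarz, from the nonnegativity of the quadratic s |-> ||s x - y||^2. *)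
Lemma cauchy_schwarz x y : inner x y <= norm x * norm y.
Proof.
set X := inner x y; set A := norm2 x; set B := norm2 y.
have hA : 0 <= A := norm2_ge0 x. have hB : 0 <= B := norm2_ge0 y.
have quad s : 0 <= s * s * A - 2 * s * X + B.
  have -> : s * s * A - 2 * s * X + B = norm2 (vsub (vscale s x) y).
    by rewrite /A /B /X /norm2 /inner; sumfold; apply: eq_bigr => j _;
       rewrite /vsub /vscale; ring.
  exact: norm2_ge0.
have key : X * X <= A * B.
  have [hA0|hApos] := Req_dec A 0.
  - suff -> : X = 0 by rewrite hA0; lra.
    have [//|hX] := Req_dec X 0; have := quad ((B + 1) / X); rewrite hA0.
    have -> : 2 * ((B + 1) / X) * X = 2 * (B + 1) by field.
    lra.
  - have := quad (X / A).
    have -> : X / A * (X / A) * A - 2 * (X / A) * X + B = B - X * X / A by field.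
    move=> h; have := Rmult_le_pos _ _ hA h.
    have -> : A * (B - X * X / A) = A * B - X * X by field.
    lra.
apply: (Rle_trans _ (sqrt (X * X))).
  by rewrite sqrt_Rsqr_abs; apply: Rle_abs.
by rewrite /norm -sqrt_mult //; apply: sqrt_le_1_alt.
Qed.

End Vec.

Lemma vec0_eq (n : nat) (hn : n = 0%nat) (x y : vec n) : x = y.
Proof.
apply: functional_extensionality => j; exfalso.
by move: (ltn_ord j); move: (nat_of_ord j); rewrite hn.
Qed.

Lemma lim_le (X B C s0 : R) : 0 < s0 ->
  (forall s, 0 < s < s0 -> X <= B + s * C) -> X <= B.
Proof.
move=> hs0 H; case: (Rle_lt_dec X B) => // hXB; exfalso.
set s := Rmin (s0 / 2) ((X - B) / (2 * (Rabs C + 1))).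
have hC := Rabs_pos C.
have hs1 : 0 < s by apply: Rmin_pos; [lra | apply: Rdiv_lt_0_compat; lra].
have hs2 : s < s0 by have := Rmin_l (s0 / 2) ((X - B) / (2 * (Rabs C + 1))); rewrite -/s; lra.
have hs3 : s * (Rabs C + 1) <= (X - B) / 2.
  have -> : (X - B) / 2 = (X - B) / (2 * (Rabs C + 1)) * (Rabs C + 1) by field; lra.
  apply: Rmult_le_compat_r; [lra | exact: Rmin_r].
have := H s (conj hs1 hs2).
have : s * C <= s * Rabs C by apply: Rmult_le_compat_l; [lra | apply: Rle_abs].
nra.
Qed.

Lemma slope_le_of_chord (phi : R -> R) (D a b : R) :
  derivable_pt_lim phi 0 D ->
  (forall t, 0 < t < 1 -> phi t - phi 0 <= t * (a + t * b)) -> D <= a.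
Proof.
move=> hD hchord; apply: (lim_le (C := 1) Rlt_0_1) => e [he _].
have he2 : 0 < e / 2 by lra.
have [del hdel] := hD _ he2.
have hb := Rabs_pos b; have hdpos := cond_pos del.
set t := Rmin (del / 2) (Rmin (1 / 2) (e / (2 * (Rabs b + 1)))).
have ht1 : t <= del / 2 := Rmin_l _ _.
have ht2 : t <= 1 / 2 by apply: (Rle_trans _ _ _ (Rmin_r _ _)); apply: Rmin_l.
have ht3 : t <= e / (2 * (Rabs b + 1)) by apply: (Rle_trans _ _ _ (Rmin_r _ _)); apply: Rmin_r.
have ht0 : 0 < t.
  by apply: Rmin_pos; [lra | apply: Rmin_pos; [lra | apply: Rdiv_lt_0_compat; lra]].
have htb : t * b <= e / 2.
  have : t * (Rabs b + 1) <= e / 2.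
    have -> : e / 2 = e / (2 * (Rabs b + 1)) * (Rabs b + 1) by field; lra.
    by apply: Rmult_le_compat_r; lra.
  have : t * b <= t * Rabs b by apply: Rmult_le_compat_l; [lra | apply: Rle_abs].
  nra.
have htdel : Rabs t < del by rewrite Rabs_pos_eq; lra.
have hslope := hdel t (Rgt_not_eq _ _ ht0) htdel.
rewrite Rplus_0_l in hslope.
have hq : (phi t - phi 0) / t <= a + t * b.
  apply: (Rmult_le_reg_r t) => //.
  have -> : (phi t - phi 0) / t * t = phi t - phi 0 by field; lra.
  have ht1' : t < 1 by lra.
  have := hchord t (conj ht0 ht1'); nra.
have := Rle_abs (D - (phi t - phi 0) / t).
rewrite Rabs_minus_sym; lra.
Qed.

Section SmoothStronglyConvex.
Variables (n : nat) (f : vec n -> R) (G : vec n -> vec n).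
Hypothesis Hg : is_gradient f G.
Implicit Types x y d : vec n.

Lemma vadd_line x d t h :
  vadd (vadd x (vscale t d)) (vscale h d) = vadd x (vscale (t + h) d).
Proof. apply: functional_extensionality => j; rewrite /vadd /vscale; ring. Qed.

Lemma deriv_line x d t :
  derivable_pt_lim (fun t => f (vadd x (vscale t d))) t
                   (inner (G (vadd x (vscale t d))) d).
Proof.
move=> eps heps.
set y := vadd x (vscale t d).
have hnd := norm_ge0 d; set nd := norm d in hnd *.
have he' : 0 < eps / (2 * (nd + 1)) by apply: Rdiv_lt_0_compat; lra.
have [del [hdel H]] := Hg y he'.
have hdel' : 0 < del / (nd + 1) by apply: Rdiv_lt_0_compat; lra.
exists (mkposreal _ hdel') => h hh0 /= hlt.
rewrite -vadd_line -/y.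
have hh : 0 < Rabs h by apply: Rabs_pos_lt.
have hn : norm (vscale h d) < del.
  rewrite norm_vscale -/nd.
  have : Rabs h * (nd + 1) < del.
    have -> : del = del / (nd + 1) * (nd + 1) by field; lra.
    apply: Rmult_lt_compat_r; lra.
  nra.
have := H _ hn; rewrite inner_vscale_r norm_vscale -/nd.
set A := f (vadd y (vscale h d)) - f y; set I := inner (G y) d => hA.
have -> : A / h - I = (A - h * I) / h by field.
have e1 : eps / (2 * (nd + 1)) * nd < eps.
  have -> : eps / (2 * (nd + 1)) * nd = eps * (nd / (2 * (nd + 1))) by field; lra.
  have : nd / (2 * (nd + 1)) < 1.
    apply: (Rmult_lt_reg_r (2 * (nd + 1))); first lra.
    rewrite /Rdiv Rmult_assoc Rinv_l; lra.
  nra.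
rewrite /Rdiv Rabs_mult Rabs_inv.
apply: (Rmult_lt_reg_r (Rabs h)) => //.
have -> : Rabs (A - h * I) * / Rabs h * Rabs h = Rabs (A - h * I) by field; lra.
nra.
Qed.

Lemma line_pt x y t : vadd x (vscale t (vsub y x)) = vadd (vscale t y) (vscale (1 - t) x).
Proof. apply: functional_extensionality => j; rewrite /vadd /vscale /vsub; ring. Qed.

Variable L : R.
Hypothesis HL : lipschitz_map L G.

(* Descent lemma: an L-Lipschitz gradient gives a quadratic upper bound.
   By the mean value theorem applied to f along [x, y] minus the bound. *)
Lemma descent x y :
  f y <= f x + inner (G x) (vsub y x) + L / 2 * norm2 (vsub y x).
Proof.
set d := vsub y x; set a := inner (G x) d; set b := L / 2 * norm2 d.
pose psi t := f (vadd x (vscale t d)) - (a * t + b * (t * t)).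
pose psi' t := inner (G (vadd x (vscale t d))) d - (a * 1 + b * (1 * t + t * 1)).
have Hd c : 0 <= c <= 1 -> derivable_pt_lim psi c (psi' c).
  move=> _; apply: derivable_pt_lim_minus; first exact: deriv_line.
  apply: derivable_pt_lim_plus; apply: derivable_pt_lim_scal;
    [exact: derivable_pt_lim_id | apply: derivable_pt_lim_mult; exact: derivable_pt_lim_id].
have [c [hc hcr]] := MVT_cor2 psi psi' 0 1 Rlt_0_1 Hd.
have hpsi' : psi' c <= 0.
  set Gc := vsub (G (vadd x (vscale c d))) (G x).
  have hcs := cauchy_schwarz Gc d; rewrite inner_vsub_l in hcs.
  have hl := HL (vadd x (vscale c d)) x.
  have hcd : vsub (vadd x (vscale c d)) x = vscale c d.
    by apply: functional_extensionality => j; rewrite /vsub /vadd /vscale; ring.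
  rewrite hcd -/Gc in hl.
  rewrite norm_vscale Rabs_pos_eq in hl; last lra.
  have hsq : norm d * norm d = norm2 d by rewrite /norm sqrt_sqrt //; exact: norm2_ge0.
  have : norm Gc * norm d <= L * c * norm d * norm d.
    by apply: Rmult_le_compat_r; [exact: norm_ge0 | lra].
  rewrite /psi' /a /b; nra.
have : psi 1 <= psi 0 by nra.
have line0 : vadd x (vscale 0 d) = x.
  by apply: functional_extensionality => j; rewrite /vadd /vscale; ring.
have line1 : vadd x (vscale 1 d) = y.
  by apply: functional_extensionality => j; rewrite /vadd /vscale /d /vsub; ring.
rewrite /psi line0 line1; lra.
Qed.

Variable mu : R.
Hypothesis Hsc : strongly_convex mu f.

(* Strong convexity gives a quadratic lower bound: the chord inequality of
   strong convexity along [x, y] bounds the slope <G x, y - x>. *)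
Lemma sc_lower x y :
  f x + inner (G x) (vsub y x) + mu / 2 * norm2 (vsub y x) <= f y.
Proof.
set d := vsub y x.
have line0 : vadd x (vscale 0 d) = x.
  by apply: functional_extensionality => j; rewrite /vadd /vscale; ring.
suff : inner (G x) d <= f y - f x - mu / 2 * norm2 d by lra.
apply: (@slope_le_of_chord (fun t => f (vadd x (vscale t d))) _ _ (mu / 2 * norm2 d)).
  by have := deriv_line x d 0; rewrite line0.
move=> t ht; rewrite /d line_pt -/d line0.
have := Hsc y x (conj (Rlt_le _ _ (proj1 ht)) (Rlt_le _ _ (proj2 ht))).
rewrite -/d; nra.
Qed.

End SmoothStronglyConvex.

(* In positive dimension the strong convexity modulus is at most the
   Lipschitz constant of the gradient (compare the two quadratic bounds). *)
Lemma mu_le_L (n : nat) (f : vec n -> R) (G : vec n -> vec n) (L mu : R) :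
  (0 < n)%nat -> is_gradient f G -> lipschitz_map L G -> strongly_convex mu f ->
  mu <= L.
Proof.
move=> hn Hg HL Hsc.
pose x0 : vec n := fun _ => 0; pose y1 : vec n := fun _ => 1.
have h1 := descent Hg HL x0 y1; have h2 := sc_lower Hg Hsc x0 y1.
have : 1 <= norm2 (vsub y1 x0).
  rewrite /norm2 /inner; have := @sumR_ge_term _ (fun j => vsub y1 x0 j * vsub y1 x0 j) (Ordinal hn)
            (fun j => Rle_0_sqr _).
  by rewrite /vsub /y1 /x0 /=; lra.
nra.
Qed.

Section FiniteExtrema.

Lemma foldr_min_props (a : R) (l : seq R) :
  (forall x, List.In x (a :: l) -> foldr Rmin a l <= x) /\
  List.In (foldr Rmin a l) (a :: l).
Proof.
elim: l => [|b l [IH1 IH2]] /=; first by split; [move=> x [<-|[]]; lra | left].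
split.
  move=> x [<-|[<-|hx]].
  - by apply: (Rle_trans _ _ _ (Rmin_r _ _)); apply: IH1; left.
  - exact: Rmin_l.
  - by apply: (Rle_trans _ _ _ (Rmin_r _ _)); apply: IH1; right.
rewrite /Rmin; case: Rle_dec => _; first by right; left.
by case: IH2 => [<-|h]; [left | right; right].
Qed.

Lemma foldr_max_props (a : R) (l : seq R) :
  (forall x, List.In x (a :: l) -> x <= foldr Rmax a l) /\
  List.In (foldr Rmax a l) (a :: l).
Proof.
elim: l => [|b l [IH1 IH2]] /=; first by split; [move=> x [<-|[]]; lra | left].
split.
  move=> x [<-|[<-|hx]].
  - by apply: (Rle_trans _ _ _ _ (Rmax_r _ _)); apply: IH1; left.
  - exact: Rmax_l.
  - by apply: (Rle_trans _ _ _ _ (Rmax_r _ _)); apply: IH1; right.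
rewrite /Rmax; case: Rle_dec => _; last by right; left.
by case: IH2 => [<-|h]; [left | right; right].
Qed.

Variables (N : nat) (F : 'I_N -> R).

Lemma in_map_enum i : List.In (F i) [seq F j | j <- enum 'I_N].
Proof.
elim: (enum 'I_N) (mem_enum (T := 'I_N) predT i) => [|a s IH] //=.
by rewrite in_cons => /orP [/eqP ->|h]; [left | right; apply: IH].
Qed.

Lemma map_enum_in x : List.In x [seq F j | j <- enum 'I_N] -> exists i, x = F i.
Proof. by elim: (enum 'I_N) => [|a s IH] //= [<-|h]; [exists a | exact: IH]. Qed.

Lemma minI_le i : minI F <= F i.
Proof.
rewrite /minI; move: (in_map_enum i).
by case: [seq F j | j <- enum 'I_N] => [|a l] // hin; apply: (proj1 (foldr_min_props a l)).
Qed.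

Lemma le_maxI i : F i <= maxI F.
Proof.
rewrite /maxI; move: (in_map_enum i).
by case: [seq F j | j <- enum 'I_N] => [|a l] // hin; apply: (proj1 (foldr_max_props a l)).
Qed.

Lemma minI_mem (i0 : 'I_N) : exists i, minI F = F i.
Proof.
rewrite /minI; move: (in_map_enum i0) map_enum_in.
case: [seq F j | j <- enum 'I_N] => [|a l] // _ hm.
exact: hm (proj2 (foldr_min_props a l)).
Qed.

Lemma maxI_mem (i0 : 'I_N) : exists i, maxI F = F i.
Proof.
rewrite /maxI; move: (in_map_enum i0) map_enum_in.
case: [seq F j | j <- enum 'I_N] => [|a l] // _ hm.
exact: hm (proj2 (foldr_max_props a l)).
Qed.

End FiniteExtrema.

(* Completing the square: for the model curvature 1/(2gm) and modulus m,
   sigma (p+r)^2 - p^2/(2gm) <= beta r^2 with sigma = 1/(2gm) - m/(2NN)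
   and beta = (NN - gm m)/(2 gm^2 m). *)
Lemma quad_ineq (gm m NN p r : R) : 0 < gm -> 0 < m -> 0 < NN ->
  (/ (2 * gm) - m / (2 * NN)) * ((p + r) * (p + r)) - / (2 * gm) * (p * p)
  <= (NN - gm * m) / (2 * (gm ^ 2 * m)) * (r * r).
Proof.
move=> h1 h2 h3.
set w := p - (NN - gm * m) / (gm * m) * r.
have e : (NN - gm * m) / (2 * (gm ^ 2 * m)) * (r * r) -
  ((/ (2 * gm) - m / (2 * NN)) * ((p + r) * (p + r)) - / (2 * gm) * (p * p))
  = m / (2 * NN) * (w * w) by rewrite /w; field; lra.
have : 0 <= m / (2 * NN) * (w * w).
  by apply: Rmult_le_pos; [apply: Rlt_le; apply: Rdiv_lt_0_compat; lra | exact: Rle_0_sqr].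
lra.
Qed.

(* The tuned step size gam = NN/m (1 - sqrt(1 - 1/k)), k = Lc/m > 1, makes
   beta = alpha * (sqrt k + sqrt(k-1))^2 (here with equality).  Writing
   sqrt k = (D + 1/D)/2 and sqrt(k-1) = (1/D - D)/2 turns it into a field identity. *)
Lemma tuned_weight (NN m Lc : R) : 0 < NN -> 0 < m -> 1 < Lc / m ->
  (NN - NN / m * (1 - sqrt (1 - / (Lc / m))) * m) /
    (2 * ((NN / m * (1 - sqrt (1 - / (Lc / m)))) ^ 2 * m))
  <= (/ (2 * (NN / m * (1 - sqrt (1 - / (Lc / m))))) - Lc / (2 * NN)) *
     (sqrt (Lc / m) + sqrt (Lc / m - 1)) ^ 2.
Proof.
move=> hN hm hk.
have hLc : Lc = Lc / m * m by field; lra.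
move: (Lc / m) hk hLc => k hk ->.
have ht := sqrt_sqrt k ltac:(lra); have hv := sqrt_sqrt (k - 1) ltac:(lra).
have ht0 : 1 < sqrt k by rewrite -sqrt_1; apply: sqrt_lt_1_alt; lra.
have hv0 : 0 < sqrt (k - 1) by apply: sqrt_lt_R0; lra.
have -> : sqrt (1 - / k) = sqrt (k - 1) / sqrt k.
  have -> : 1 - / k = (sqrt (k - 1) / sqrt k) * (sqrt (k - 1) / sqrt k).
    have -> : sqrt (k - 1) / sqrt k * (sqrt (k - 1) / sqrt k)
              = (sqrt (k - 1) * sqrt (k - 1)) / (sqrt k * sqrt k) by field; lra.
    by rewrite ht hv; field; lra.
  by apply: sqrt_square; apply: Rlt_le; apply: Rdiv_lt_0_compat; lra.
move: (sqrt k) (sqrt (k - 1)) ht hv ht0 hv0 => t v ht hv ht0 hv0.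
rewrite -ht.
have hTV : (t + v) * (t - v) = 1 by nra.
have hpos : 0 < t - v by nra.
have [D [hD [-> ->]]] : exists D, 0 < D /\ t = (D + / D) / 2 /\ v = (/ D - D) / 2.
  have hinv : / (t - v) = t + v.
    have -> : t + v = (t + v) * (t - v) / (t - v) by field; lra.
    by rewrite hTV /Rdiv Rmult_1_l.
  by exists (t - v); split => //; rewrite hinv; split; field.
apply: Req_le; field; repeat split; nra.
Qed.

Lemma shuffled_constant_bound (NN d D : R) : 1 <= NN -> 0 < d -> d <= D -> D < 1 ->
  0 <= d * (1 - D) / (NN * (2 - d) ^ 2 * (1 - d)) /\
  d * (1 - D) / (NN * (2 - d) ^ 2 * (1 - d)) * (1 + NN * (1 - d) / d) <= 1.
Proof.
move=> hN hd hdD hD.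
have h2 : 0 < (2 - d) ^ 2 by apply: pow_lt; lra.
have hden : 0 < NN * (2 - d) ^ 2 * (1 - d).
  by apply: Rmult_lt_0_compat; [apply: Rmult_lt_0_compat|]; lra.
split.
  apply: Rmult_le_pos; [apply: Rmult_le_pos; lra | apply: Rlt_le; exact: Rinv_0_lt_compat].
have -> : d * (1 - D) / (NN * (2 - d) ^ 2 * (1 - d)) * (1 + NN * (1 - d) / d)
   = (1 - D) * (d + NN * (1 - d)) / (NN * (2 - d) ^ 2 * (1 - d)) by field; lra.
have : (1 - D) * (d + NN * (1 - d)) <= NN * (2 - d) ^ 2 * (1 - d).
  have : (1 - D) * (d + NN * (1 - d)) <= (1 - d) * (d + NN * (1 - d)).
    by apply: Rmult_le_compat_r; nra.
  have : d + NN * (1 - d) <= NN * (2 - d) ^ 2.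
    have -> : (2 - d) ^ 2 = (1 - d) + (3 - 3 * d + d * d) by simpl; ring.
    nra.
  nra.
move=> h; apply: (Rmult_le_reg_r (NN * (2 - d) ^ 2 * (1 - d))) => //.
rewrite Rmult_1_l /Rdiv Rmult_assoc Rinv_l; lra.
Qed.

Lemma contraction_of_decrease (c K Y Y' : R) :
  0 <= K -> c * (1 + K) <= 1 -> 0 <= Y' -> Y' <= Y -> Y' <= K * (Y - Y') ->
  Y' <= (1 - c) * Y.
Proof.
move=> hK hc hY' hYY hdec.
have h1 : K * Y <= (1 + K) * ((1 - c) * Y) by nra.
apply: (Rmult_le_reg_l (1 + K)); lra.
Qed.

Section Expectation.
Variables (N : nat) (q : seq {set 'I_N} -> {set 'I_N} -> R).

Lemma expect_scal k h c F : expect q k h (fun h' => c * F h') = c * expect q k h F.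
Proof.
elim: k h => [|k IH] h //=.
by rewrite -sumR_scal; apply: eq_bigr => S _; rewrite IH; ring.
Qed.

Lemma expect_zero k h : expect q k h (fun _ => 0) = 0.
Proof. by elim: k h => [|k IH] h //=; rewrite big1 // => S _; rewrite IH; ring. Qed.

Lemma expect_tower k h F :
  expect q k.+1 h F =
  expect q k h (fun h' => \big[Rplus/0]_(S : {set 'I_N}) (q h' S * F (rcons h' S))).
Proof. by elim: k h => [|k IH] h //=; apply: eq_bigr => S _; rewrite -IH. Qed.

Hypothesis Hq : sampling_kernel q.

Lemma expect_mono k h F G : (forall h', F h' <= G h') -> expect q k h F <= expect q k h G.
Proof.
move=> H; elim: k h => [|k IH] h /=; first exact: H.
by apply: sumR_le => S _; apply: Rmult_le_compat_l; [exact: (proj1 Hq) | exact: IH].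
Qed.

Lemma expect_sampled_sum (w : 'I_N -> R) h :
  \big[Rplus/0]_(S : {set 'I_N}) (q h S * \big[Rplus/0]_(i < N | i \in S) w i) =
  \big[Rplus/0]_(i < N) (w i * \big[Rplus/0]_(S : {set 'I_N} | i \in S) q h S).
Proof.
have -> : \big[Rplus/0]_(S : {set 'I_N}) (q h S * \big[Rplus/0]_(i < N | i \in S) w i) =
          \big[Rplus/0]_(S : {set 'I_N}) \big[Rplus/0]_(i < N)
            (if i \in S then q h S * w i else 0).
  apply: eq_bigr => S _; rewrite (big_mkcond (fun i => i \in S)) -sumR_scal.
  by apply: eq_bigr => i _; case: (i \in S); ring.
rewrite exchange_big; apply: eq_bigr => i _.
rewrite (big_mkcond (fun S : {set 'I_N} => i \in S)) -sumR_scal.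
by apply: eq_bigr => S _; case: (i \in S); ring.
Qed.

Lemma inclusion_le1 (p : 'I_N -> R) : sampling_lower_bound q p -> forall i, p i <= 1.
Proof.
move=> Hlb i; have := Hlb [::] i.
have : \big[Rplus/0]_(S : {set 'I_N} | i \in S) q [::] S
       <= \big[Rplus/0]_(S : {set 'I_N}) q [::] S.
  rewrite (big_mkcond (fun S : {set 'I_N} => i \in S)); apply: sumR_le => S _.
  by case: (i \in S); [lra | exact: (proj1 Hq)].
rewrite (proj2 Hq); lra.
Qed.

End Expectation.

Section Finito.
Variables (n N : nat).
Hypothesis HN : (0 < N)%nat.
Variables (f : 'I_N -> vec n -> R) (df : 'I_N -> vec n -> vec n) (L mu : 'I_N -> R).
Hypothesis Hgrad : forall i, is_gradient (f i) (df i).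
Hypothesis HL : forall i, lipschitz_map (L i) (df i).
Hypothesis Hmu_pos : forall i, 0 < mu i.
Hypothesis Hsc : forall i, strongly_convex (mu i) (f i).
Variable g : vec n -> option R.
Hypothesis Hg_convex : convex_ext g.
Variable xstar : vec n.
Hypothesis Hxstar : is_minimizer f g xstar.
Variable gam : 'I_N -> R.
Hypothesis Hgam : forall i, 0 < gam i < INR N / L i.
Variable prox : vec n -> vec n.
Hypothesis Hprox : forall u, is_prox (gamhat gam) g u (prox u).
Variables (xinit : vec n) (ginit : R).
Hypothesis Hxinit : g xinit = Some ginit.

Lemma N_pos : 0 < INR N.
Proof. by apply: lt_0_INR; apply/ltP. Qed.

Definition idx0 : 'I_N := Ordinal HN.

Lemma gam_pos i : 0 < gam i. Proof. by case: (Hgam i). Qed.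

Definition invgam_sum := sumI (fun i => / gam i).

Lemma invgam_sum_pos : 0 < invgam_sum.
Proof.
apply: (Rlt_le_trans _ (/ gam idx0)); first exact: Rinv_0_lt_compat (gam_pos idx0).
by apply: sumR_ge_term => i; apply: Rlt_le; apply: Rinv_0_lt_compat; exact: gam_pos.
Qed.

Lemma gamhat_pos : 0 < gamhat gam.
Proof. exact: Rinv_0_lt_compat invgam_sum_pos. Qed.

(* The Finito state as a function of the anchor points u_i. *)
Definition s_of (u : 'I_N -> vec n) i := vsub (u i) (vscale (gam i / INR N) (df i (u i))).
Definition shat_of (u : 'I_N -> vec n) : vec n :=
  vscale (gamhat gam) (fun j => sumI (fun i => / gam i * s_of u i j)).
Definition z_of u := prox (shat_of u).

Definition refresh (u : 'I_N -> vec n) (I : {set 'I_N}) : 'I_N -> vec n :=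
  fun i => if i \in I then z_of u else u i.

Definition anchors (h : seq {set 'I_N}) := foldl refresh (fun _ => xinit) h.

Lemma finito_step_refresh u I :
  finito_step gam df prox (s_of u, shat_of u) I = (s_of (refresh u I), shat_of (refresh u I)).
Proof.
have hN := N_pos; have hW := invgam_sum_pos.
rewrite /finito_step /refresh /z_of /=; set z := prox (shat_of u).
congr pair; first by apply: functional_extensionality => i; rewrite /s_of; case: (i \in I).
apply: functional_extensionality => j.
rewrite /vadd /shat_of /vscale /sumI (big_mkcond (fun i => i \in I)).
sumfold; apply: eq_bigr => i _.
have := gam_pos i; rewrite /s_of /vsub /vscale /gamhat; rewrite /invgam_sum in hW => hg.
by case: (i \in I); field; repeat split; lra.
Qed.

Lemma finito_state_anchors h :
  finito_state gam df prox xinit h = (s_of (anchors h), shat_of (anchors h)).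
Proof.
elim/last_ind: h => [|h S IH] //.
by rewrite /finito_state /anchors !foldl_rcons -/(finito_state _ _ _ _ h) IH finito_step_refresh.
Qed.

Lemma finito_z_anchors h : finito_z gam df prox xinit h = z_of (anchors h).
Proof. by rewrite /finito_z finito_state_anchors. Qed.

Lemma anchors_rcons h S : anchors (rcons h S) = refresh (anchors h) S.
Proof. exact: foldl_rcons. Qed.

Definition model (u : 'I_N -> vec n) i (x : vec n) :=
  f i (u i) / INR N + inner (df i (u i)) (vsub x (u i)) / INR N
  + / (2 * gam i) * norm2 (vsub x (u i)).

Definition model_val (u : 'I_N -> vec n) (x : vec n) :=
  match g x with Some r => r + sumI (fun i => model u i x) | None => 0 end.

Definition lyap u := model_val u (z_of u).

(* Constants of the two-sided comparison between the model and f_i / N. *)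
Definition alpha i := / (2 * gam i) - L i / (2 * INR N).
Definition sigma i := / (2 * gam i) - mu i / (2 * INR N).
Definition beta i := (INR N - gam i * mu i) / (2 * (gam i ^ 2 * mu i)).

(* The step-size condition gam_i < N / L_i makes alpha_i positive. *)
Lemma gamL_lt_N i : gam i * L i < INR N.
Proof.
have hN := N_pos; have [h1 h2] := Hgam i.
have hL : 0 < L i.
  case: (Rle_lt_dec (L i) 0) => // hL; exfalso.
  have [hL0|hLn] := Req_dec (L i) 0; first by rewrite hL0 /Rdiv Rinv_0 Rmult_0_r in h2; lra.
  have : INR N / L i < 0 by apply: Rmult_pos_neg => //; apply: Rinv_lt_0_compat; lra.
  lra.
have := Rmult_lt_compat_r (L i) _ _ hL h2.
by rewrite /Rdiv Rmult_assoc Rinv_l; lra.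
Qed.

Lemma alpha_eq i : alpha i = (INR N - gam i * L i) / (2 * gam i * INR N).
Proof. have := gam_pos i; have := N_pos; rewrite /alpha => *; field; lra. Qed.

Lemma alpha_pos i : 0 < alpha i.
Proof.
rewrite alpha_eq; have := gamL_lt_N i; have := gam_pos i; have := N_pos => *.
apply: Rdiv_lt_0_compat; nra.
Qed.

Lemma model_sum_diff u x z :
  sumI (fun i => model u i x) - sumI (fun i => model u i z) =
  / (2 * gamhat gam) * (norm2 (vsub x (shat_of u)) - norm2 (vsub z (shat_of u))).
Proof.
have hW := invgam_sum_pos; have hN := N_pos.
have e1 i : model u i x - model u i z =
   \big[Rplus/0]_(j < n) (/ (2 * gam i) * (x j * x j - z j * z j)
                         - (x j - z j) * (/ gam i * s_of u i j)).
  rewrite /model /inner /norm2 /s_of /vsub /vscale.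
  have -> : forall a b c d e : R, (a + b + c) - (a + d + e) = (b - d) + (c - e) by move=> *; ring.
  sumfold; apply: eq_bigr => j _; have := gam_pos i => hg; field; lra.
rewrite /sumI -sumR_sub (eq_bigr _ (fun i _ => e1 i)) exchange_big.
rewrite /norm2 /inner; sumfold; apply: eq_bigr => j _.
rewrite sumR_sub.
have -> : \big[Rplus/0]_(i < N) (/ (2 * gam i) * (x j * x j - z j * z j))
          = invgam_sum / 2 * (x j * x j - z j * z j).
  rewrite /invgam_sum /sumI /Rdiv -!sumR_scal_r; apply: eq_bigr => i _.
  by have := gam_pos i => hg; field; lra.
rewrite sumR_scal /shat_of /vsub /vscale /gamhat -/(sumI (fun i => / gam i * s_of u i j)).
rewrite -/invgam_sum; field; lra.
Qed.

(* Optimality of z(u) = prox(s_hat): the prox objective grows quadratically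
   away from its minimizer (convexity of g along the segment [z, x]). *)
Lemma prox_growth u x gx : g x = Some gx ->
  exists gz, g (z_of u) = Some gz /\
    gz + / (2 * gamhat gam) * norm2 (vsub (z_of u) (shat_of u))
       + / (2 * gamhat gam) * norm2 (vsub x (z_of u))
    <= gx + / (2 * gamhat gam) * norm2 (vsub x (shat_of u)).
Proof.
move=> hx; have [gz [hz hmin]] := Hprox (shat_of u).
exists gz; split => //; rewrite /z_of.
move: (gamhat gam) gamhat_pos hmin => t ht hmin.
move: (prox (shat_of u)) hz hmin => z hz hmin.
move: (shat_of u) hmin => sh hmin.
have hit : 0 < / (2 * t) by apply: Rinv_0_lt_compat; lra.
have key : gz <= gx + 2 * / (2 * t) * inner (vsub z sh) (vsub x z).
  have hn := norm2_ge0 (vsub x z).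
  apply: (lim_le (C := / (2 * t) * norm2 (vsub x z)) Rlt_0_1) => s [hs1 hs2].
  have [c [hc hcle]] := Hg_convex (conj (Rlt_le _ _ hs1) (Rlt_le _ _ hs2)) hx hz.
  have := hmin _ _ hc; rewrite norm2_conv => hm.
  apply: (Rmult_le_reg_l s) => //; nra.
have := norm2_split x z sh; nra.
Qed.

Lemma z_dom u : exists gz, g (z_of u) = Some gz.
Proof. by have [gz [hz _]] := Hprox (shat_of u); exists gz. Qed.

Lemma lyap_growth u x gx : g x = Some gx ->
  lyap u + / (2 * gamhat gam) * norm2 (vsub x (z_of u)) <= model_val u x.
Proof.
move=> hx; have [gz [hz hg]] := prox_growth u hx.
have hd := model_sum_diff u x (z_of u).
rewrite /lyap /model_val hx hz; lra.
Qed.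

Lemma model_self u i : model u i (u i) = f i (u i) / INR N.
Proof. rewrite /model vsub_self inner_zero_r norm2_zero /Rdiv; ring. Qed.

(* Two-sided comparison of the model with f_i / N: the descent lemma from below,
   strong convexity from above. *)
Lemma model_ge u i x : f i x / INR N + alpha i * norm2 (vsub x (u i)) <= model u i x.
Proof.
have hN := N_pos; have hg := gam_pos i.
have hd := descent (Hgrad i) (HL i) (u i) x.
have hdiv : f i x / INR N <= (f i (u i) + inner (df i (u i)) (vsub x (u i))
                               + L i / 2 * norm2 (vsub x (u i))) / INR N.
  by apply: Rmult_le_compat_r => //; apply: Rlt_le; apply: Rinv_0_lt_compat.
rewrite /model /alpha; move: hdiv; rewrite /Rdiv => hdiv.
have -> : (/ (2 * gam i) - L i * / (2 * INR N)) * norm2 (vsub x (u i))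
  = / (2 * gam i) * norm2 (vsub x (u i)) - L i / 2 * norm2 (vsub x (u i)) * / INR N.
  by field; lra.
lra.
Qed.

Lemma model_le u i x : model u i x <= f i x / INR N + sigma i * norm2 (vsub x (u i)).
Proof.
have hN := N_pos; have hg := gam_pos i.
have hd := sc_lower (Hgrad i) (Hsc i) (u i) x.
have hdiv : (f i (u i) + inner (df i (u i)) (vsub x (u i))
             + mu i / 2 * norm2 (vsub x (u i))) / INR N <= f i x / INR N.
  by apply: Rmult_le_compat_r => //; apply: Rlt_le; apply: Rinv_0_lt_compat.
rewrite /model /sigma; move: hdiv; rewrite /Rdiv => hdiv.
have -> : (/ (2 * gam i) - mu i * / (2 * INR N)) * norm2 (vsub x (u i))
  = / (2 * gam i) * norm2 (vsub x (u i)) - mu i / 2 * norm2 (vsub x (u i)) * / INR N.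
  by field; lra.
lra.
Qed.

Lemma phiR_dom x gx : g x = Some gx -> phiR f g x = / INR N * sumI (fun i => f i x) + gx.
Proof. by move=> hx; rewrite /phiR /phi hx. Qed.

Lemma sum_fdiv x : / INR N * sumI (fun i => f i x) = sumI (fun i => f i x / INR N).
Proof. rewrite /sumI -sumR_scal; apply: eq_bigr => i _; rewrite /Rdiv; ring. Qed.

Lemma model_val_ge u x gx : g x = Some gx ->
  phiR f g x + sumI (fun i => alpha i * norm2 (vsub x (u i))) <= model_val u x.
Proof.
move=> hx; rewrite (phiR_dom hx) /model_val hx sum_fdiv.
suff : sumI (fun i => f i x / INR N) + sumI (fun i => alpha i * norm2 (vsub x (u i)))
       <= sumI (fun i => model u i x) by lra.
by rewrite /sumI -sumR_add; apply: sumR_le => i _; exact: model_ge.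
Qed.

Lemma model_val_le u x gx : g x = Some gx ->
  model_val u x <= phiR f g x + sumI (fun i => sigma i * norm2 (vsub x (u i))).
Proof.
move=> hx; rewrite (phiR_dom hx) /model_val hx sum_fdiv.
suff : sumI (fun i => model u i x)
       <= sumI (fun i => f i x / INR N) + sumI (fun i => sigma i * norm2 (vsub x (u i))) by lra.
by rewrite /sumI -sumR_add; apply: sumR_le => i _; exact: model_le.
Qed.

Definition phistar := phiR f g xstar.

Lemma xstar_dom : exists gs, g xstar = Some gs.
Proof.
have [ms [hm _]] := Hxstar.
by move: hm; rewrite /phi; case: (g xstar) => [r|] // _; exists r.
Qed.

Lemma phistar_le x gx : g x = Some gx -> phistar <= phiR f g x.
Proof.
have [ms [hm hmin]] := Hxstar.
move=> hx; have hphi : phi f g x = Some (phiR f g x) by rewrite /phiR /phi hx.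
by have := hmin _ _ hphi; rewrite /phistar /phiR hm.
Qed.

(* Suboptimality of V is controlled by the distances of z(u) to the anchors:
   compare M_u at x_star with phi(x_star) and complete the square. *)
Lemma lyap_suboptimality u : lyap u - phistar <= sumI (fun i => beta i * norm2 (vsub (z_of u) (u i))).
Proof.
have [gs hs] := xstar_dom.
have h1 := lyap_growth u hs; have h2 := model_val_le u hs; rewrite -/phistar in h2.
suff : sumI (fun i => sigma i * norm2 (vsub xstar (u i)))
       - / (2 * gamhat gam) * norm2 (vsub xstar (z_of u))
       <= sumI (fun i => beta i * norm2 (vsub (z_of u) (u i))) by lra.
have -> : / (2 * gamhat gam) = sumI (fun i => / (2 * gam i)).
  have hW := invgam_sum_pos; rewrite /gamhat -/invgam_sum.
  have -> : / (2 * / invgam_sum) = / 2 * invgam_sum by field; lra.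
  rewrite /invgam_sum /sumI -sumR_scal; apply: eq_bigr => i _.
  by have := gam_pos i => hg; field; lra.
rewrite /sumI -sumR_scal_r -sumR_sub; apply: sumR_le => i _.
rewrite /norm2 /inner -!sumR_scal -sumR_sub; apply: sumR_le => j _.
rewrite /vsub /sigma /beta.
have := quad_ineq (xstar j - z_of u j) (z_of u j - u i j) (gam_pos i) (Hmu_pos i) N_pos.
have -> : xstar j - z_of u j + (z_of u j - u i j) = xstar j - u i j by ring.
lra.
Qed.

Lemma lyap_decrease u I :
  lyap (refresh u I) + / (2 * gamhat gam) * norm2 (vsub (z_of u) (z_of (refresh u I)))
  <= lyap u - \big[Rplus/0]_(i < N | i \in I) (alpha i * norm2 (vsub (z_of u) (u i))).
Proof.
have [gz hz] := z_dom u.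
have h1 := lyap_growth (refresh u I) hz.
suff : model_val (refresh u I) (z_of u)
       <= lyap u - \big[Rplus/0]_(i < N | i \in I) (alpha i * norm2 (vsub (z_of u) (u i))).
  by lra.
rewrite /lyap /model_val hz.
have -> : sumI (fun i => model (refresh u I) i (z_of u)) =
          sumI (fun i => model u i (z_of u)) -
          \big[Rplus/0]_(i < N | i \in I) (model u i (z_of u) - f i (z_of u) / INR N).
  rewrite /sumI (big_mkcond (fun i => i \in I)) -sumR_sub; apply: eq_bigr => i _.
  case: (boolP (i \in I)) => hi.
  - have e : refresh u I i = z_of u by rewrite /refresh hi.
    by have := model_self (refresh u I) i; rewrite e => ->; ring.
  - by rewrite /model /refresh (negbTE hi); ring.
suff : \big[Rplus/0]_(i < N | i \in I) (alpha i * norm2 (vsub (z_of u) (u i))) <=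
       \big[Rplus/0]_(i < N | i \in I) (model u i (z_of u) - f i (z_of u) / INR N) by lra.
by apply: sumR_le => i _; have := model_ge u i (z_of u); lra.
Qed.

Lemma lyap_init : lyap (fun _ => xinit) <= phiR f g xinit.
Proof.
have h1 := lyap_growth (fun _ => xinit) Hxinit.
have h2 := norm2_ge0 (vsub xinit (z_of (fun _ => xinit))).
have hg : 0 < / (2 * gamhat gam) by have := gamhat_pos => *; apply: Rinv_0_lt_compat; lra.
have : model_val (fun _ => xinit) xinit = phiR f g xinit.
  rewrite /model_val Hxinit (phiR_dom Hxinit) sum_fdiv Rplus_comm; congr Rplus.
  by apply: eq_bigr => i _; exact: (model_self (fun _ => xinit) i).
nra.
Qed.

Lemma phi_le_lyap u : phiR f g (z_of u) <= lyap u.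
Proof.
have [gz hz] := z_dom u; have h := model_val_ge u hz.
have : 0 <= sumI (fun i => alpha i * norm2 (vsub (z_of u) (u i))).
  by apply: sumR_ge0 => i _; apply: Rmult_le_pos; [apply: Rlt_le; exact: alpha_pos | exact: norm2_ge0].
rewrite /lyap; lra.
Qed.

Lemma lyap_ge_phistar u : phistar <= lyap u.
Proof. have [gz hz] := z_dom u; have := phistar_le hz; have := phi_le_lyap u; lra. Qed.

Definition summu := sumI mu.

Lemma summu_pos : 0 < summu.
Proof.
apply: (Rlt_le_trans _ (mu idx0)); first exact: Hmu_pos.
by apply: sumR_ge_term => i; apply: Rlt_le; exact: Hmu_pos.
Qed.

(* Quadratic growth of phi around its minimizer, with modulus sum mu / N:
   strong convexity of the f_i and convexity of g along [x_star, x]. *)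
Lemma quadratic_growth x gx : g x = Some gx ->
  summu / (2 * INR N) * norm2 (vsub x xstar) <= phiR f g x - phistar.
Proof.
move=> hx; have [gs hs] := xstar_dom.
have hN := N_pos; have hsm := summu_pos; have hn := norm2_ge0 (vsub x xstar).
set K := summu / (2 * INR N) * norm2 (vsub x xstar).
suff : K - (phiR f g x - phistar) <= 0 by lra.
apply: (lim_le (C := K) Rlt_0_1) => s [hs1 hs2].
have [c [hc hcle]] := Hg_convex (conj (Rlt_le _ _ hs1) (Rlt_le _ _ hs2)) hx hs.
have hst := phistar_le hc.
rewrite (phiR_dom hc) in hst; rewrite /phistar (phiR_dom hs) -/phistar (phiR_dom hx).
have hsum : sumI (fun i => f i (vadd (vscale s x) (vscale (1 - s) xstar))) <=
   s * sumI (fun i => f i x) + (1 - s) * sumI (fun i => f i xstar)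
   - / 2 * s * (1 - s) * norm2 (vsub x xstar) * summu.
  have hsc i := Hsc i x xstar (conj (Rlt_le _ _ hs1) (Rlt_le _ _ hs2)).
  move: (norm2 (vsub x xstar)) hsc => n2 hsc.
  rewrite /summu /sumI -!sumR_scal -sumR_add -sumR_sub.
  by apply: sumR_le => i _ /=; have := hsc i; lra.
rewrite /phistar (phiR_dom hs) in hst.
have hinvN : 0 < / INR N by apply: Rinv_0_lt_compat.
have := Rmult_le_compat_l _ _ _ (Rlt_le _ _ hinvN) hsum.
have eK : / INR N * (/ 2 * s * (1 - s) * norm2 (vsub x xstar) * summu) = s * (1 - s) * K.
  by rewrite /K; field; lra.
move=> h.
suff : s * K - s * (/ INR N * sumI (fun i => f i x) + gx
                    - (/ INR N * sumI (fun i => f i xstar) + gs)) <= s * (s * K).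
  by move=> h'; apply: (Rmult_le_reg_l s) => //; lra.
nra.
Qed.

(* In positive dimension mu_i <= L_i, hence gam_i mu_i < N and beta_i > 0. *)
Section PositiveDimension.
Hypothesis Hn : (0 < n)%nat.

Lemma gammu_lt_N i : gam i * mu i < INR N.
Proof.
have := mu_le_L Hn (Hgrad i) (HL i) (Hsc i); have := gamL_lt_N i; have := gam_pos i.
nra.
Qed.

Lemma beta_pos i : 0 < beta i.
Proof.
have := gammu_lt_N i; have := gam_pos i; have := Hmu_pos i => hm hg h.
apply: Rdiv_lt_0_compat; first lra.
by apply: Rmult_lt_0_compat; [lra | apply: Rmult_lt_0_compat; [apply: pow_lt |]].
Qed.

Lemma alpha_le_beta i : alpha i <= beta i.
Proof.
have hml := mu_le_L Hn (Hgrad i) (HL i) (Hsc i).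
have hg := gam_pos i; have hm := Hmu_pos i; have hN := N_pos; have hL := gamL_lt_N i.
rewrite alpha_eq /beta.
suff : 0 <= (INR N - gam i * mu i) / (2 * (gam i ^ 2 * mu i))
            - (INR N - gam i * L i) / (2 * gam i * INR N) by lra.
have -> : (INR N - gam i * mu i) / (2 * (gam i ^ 2 * mu i))
          - (INR N - gam i * L i) / (2 * gam i * INR N)
  = ((INR N - gam i * mu i) ^ 2 + gam i ^ 2 * mu i * (L i - mu i))
    / (2 * gam i ^ 2 * mu i * INR N) by field; lra.
have hg2 := pow_lt _ 2 hg.
have hgm : 0 < gam i ^ 2 * mu i by exact: Rmult_lt_0_compat.
apply: Rmult_le_pos.
  have : 0 <= gam i ^ 2 * mu i * (L i - mu i) by apply: Rmult_le_pos; lra.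
  have := pow2_ge_0 (INR N - gam i * mu i); lra.
by apply: Rlt_le; apply: Rinv_0_lt_compat; apply: Rmult_lt_0_compat; lra.
Qed.

End PositiveDimension.

Definition D0 := phiR f g xinit - phistar.

Definition lyap_gap h := lyap (anchors h) - phistar.

Lemma lyap_init_gap : lyap_gap [::] <= D0.
Proof. by change (lyap (fun _ => xinit) - phistar <= D0); have := lyap_init; rewrite /D0; lra. Qed.

Lemma dist_le_lyap u :
  / 2 * norm2 (vsub (z_of u) xstar) <= INR N / summu * (lyap u - phistar).
Proof.
have [gz hz] := z_dom u; have hgr := quadratic_growth hz; have := phi_le_lyap u.
have hN := N_pos; have hsm := summu_pos.
have -> : / 2 * norm2 (vsub (z_of u) xstar)
          = INR N / summu * (summu / (2 * INR N) * norm2 (vsub (z_of u) xstar)).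
  by field; lra.
move=> h; apply: Rmult_le_compat_l; [apply: Rlt_le; exact: Rdiv_lt_0_compat | lra].
Qed.

Section Randomized.
Variable q : seq {set 'I_N} -> {set 'I_N} -> R.
Hypothesis Hq : sampling_kernel q.
Variable p : 'I_N -> R.
Hypothesis Hlb : sampling_lower_bound q p.
Variable r : R.
Hypothesis Hr0 : 0 <= r.
Hypothesis Hrb : forall i, r * beta i <= alpha i * p i.
Hypothesis Hn : (0 < n)%nat.

Lemma rate_le1 : r <= 1.
Proof.
have := Hrb idx0; have := beta_pos Hn idx0; have := alpha_le_beta Hn idx0.
have := inclusion_le1 Hq Hlb idx0; have := alpha_pos idx0.
case: (Rle_lt_dec (p idx0) 0) => hp; nra.
Qed.

Lemma expected_decrease h :
  \big[Rplus/0]_(S : {set 'I_N}) (q h S * lyap_gap (rcons h S)) <= (1 - r) * lyap_gap h.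
Proof.
set u := anchors h; set w := fun i => alpha i * norm2 (vsub (z_of u) (u i)).
have hstep S : lyap_gap (rcons h S) <= lyap_gap h - \big[Rplus/0]_(i < N | i \in S) w i.
  rewrite /lyap_gap anchors_rcons -/u; have := lyap_decrease u S.
  have : 0 <= / (2 * gamhat gam) * norm2 (vsub (z_of u) (z_of (refresh u S))).
    by apply: Rmult_le_pos; [have := gamhat_pos => *; apply: Rlt_le; apply: Rinv_0_lt_compat; lra
                            | exact: norm2_ge0].
  rewrite /w; lra.
apply: (Rle_trans _ (\big[Rplus/0]_(S : {set 'I_N})
                        (q h S * (lyap_gap h - \big[Rplus/0]_(i < N | i \in S) w i)))).
  by apply: sumR_le => S _; apply: Rmult_le_compat_l; [exact: (proj1 Hq) | exact: hstep].
have -> : \big[Rplus/0]_(S : {set 'I_N})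
            (q h S * (lyap_gap h - \big[Rplus/0]_(i < N | i \in S) w i))
   = lyap_gap h - \big[Rplus/0]_(i < N) (w i * \big[Rplus/0]_(S : {set 'I_N} | i \in S) q h S).
  transitivity (\big[Rplus/0]_(S : {set 'I_N}) (q h S * lyap_gap h)
                - \big[Rplus/0]_(S : {set 'I_N}) (q h S * \big[Rplus/0]_(i < N | i \in S) w i)).
    by rewrite -sumR_sub; apply: eq_bigr => S _; ring.
  by rewrite sumR_scal_r (proj2 Hq h) Rmult_1_l expect_sampled_sum.
suff : r * lyap_gap h
       <= \big[Rplus/0]_(i < N) (w i * \big[Rplus/0]_(S : {set 'I_N} | i \in S) q h S) by lra.
apply: (Rle_trans _ (r * sumI (fun i => beta i * norm2 (vsub (z_of u) (u i))))).
  by apply: Rmult_le_compat_l => //; exact: lyap_suboptimality.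
rewrite /sumI -sumR_scal; apply: sumR_le => i _; rewrite /w.
have := Hlb h i; have := Hrb i; have := alpha_pos i; have := norm2_ge0 (vsub (z_of u) (u i)).
move: (\big[Rplus/0]_(S : {set 'I_N} | i \in S) q h S) => Q hn2 ha hrb hpq.
have : 0 <= (alpha i * Q - r * beta i) * norm2 (vsub (z_of u) (u i)) by apply: Rmult_le_pos; nra.
nra.
Qed.

Lemma expected_lyap_gap k : expect q k [::] lyap_gap <= (1 - r) ^ k * lyap_gap [::].
Proof.
have hr1 := rate_le1.
elim: k => [|k IH]; first by rewrite /=; lra.
rewrite expect_tower.
apply: (Rle_trans _ (expect q k [::] (fun h' => (1 - r) * lyap_gap h'))).
  by apply: expect_mono => // h'; exact: expected_decrease.
by rewrite expect_scal /= Rmult_assoc; apply: Rmult_le_compat_l; lra.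
Qed.

Lemma randomized_rate k :
  expect q k [::] (fun h => phiR f g (finito_z gam df prox xinit h) - phistar)
    <= D0 * (1 - r) ^ k /\
  / 2 * expect q k [::] (fun h => norm2 (vsub (finito_z gam df prox xinit h) xstar))
    <= INR N * D0 / summu * (1 - r) ^ k.
Proof.
have hpow : 0 <= (1 - r) ^ k by apply: pow_le; have := rate_le1; lra.
have hE : expect q k [::] lyap_gap <= D0 * (1 - r) ^ k.
  have := expected_lyap_gap k; have := lyap_init_gap => h0 h.
  by apply: (Rle_trans _ _ _ h); rewrite Rmult_comm; apply: Rmult_le_compat_r.
have hNs : 0 < INR N / summu by apply: Rdiv_lt_0_compat; [exact: N_pos | exact: summu_pos].
split.
  apply: (Rle_trans _ _ _ _ hE); apply: expect_mono => // h.
  by rewrite finito_z_anchors /lyap_gap; have := phi_le_lyap (anchors h); lra.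
rewrite -expect_scal.
apply: (Rle_trans _ (expect q k [::] (fun h => INR N / summu * lyap_gap h))).
  by apply: expect_mono => // h; rewrite finito_z_anchors; exact: dist_le_lyap.
rewrite expect_scal.
have -> : INR N * D0 / summu * (1 - r) ^ k = INR N / summu * (D0 * (1 - r) ^ k).
  by rewrite /Rdiv; ring.
by apply: Rmult_le_compat_l; lra.
Qed.

End Randomized.

(* Shuffled sampling.  Along a sequence s of index sets started from anchors
   u0, z moves by zstep m = ||z_m - z_{m+1}||^2; the decrease of V pays for
   the total squared path length zpath m. *)
Section Epoch.
Variables (u0 : 'I_N -> vec n) (s : seq {set 'I_N}).

Definition traj m := foldl refresh u0 (take m s).
Definition ztraj m := z_of (traj m).
Definition zstep m := norm2 (vsub (ztraj m) (ztraj m.+1)).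
Definition zpath m := \big[Rplus/0]_(l < m) zstep l.

Lemma traj_succ m : (m < size s)%nat -> traj m.+1 = refresh (traj m) (nth set0 s m).
Proof. by move=> hm; rewrite /traj (take_nth set0 hm) foldl_rcons. Qed.

Lemma zstep_ge0 m : 0 <= zstep m. Proof. exact: norm2_ge0. Qed.

Lemma zpath_succ m : zpath m.+1 = zpath m + zstep m.
Proof. by rewrite /zpath big_ord_recr. Qed.

Lemma zpath_ge0 m : 0 <= zpath m.
Proof. by apply: sumR_ge0 => l _; exact: zstep_ge0. Qed.

Lemma ztraj_dist j d : norm2 (vsub (ztraj (j + d)) (ztraj j)) <= INR d * zpath (j + d).
Proof.
elim: d => [|d IH]; first by rewrite addn0 vsub_self norm2_zero /=; lra.
rewrite addnS zpath_succ.
have hee : norm2 (vsub (ztraj (j + d).+1) (ztraj (j + d))) = zstep (j + d).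
  by rewrite /zstep norm2_vsub_sym.
have -> : vsub (ztraj (j + d).+1) (ztraj j)
          = vadd (vsub (ztraj (j + d)) (ztraj j)) (vsub (ztraj (j + d).+1) (ztraj (j + d))).
  by apply: functional_extensionality => k; rewrite /vsub /vadd; ring.
have hS := zpath_ge0 (j + d); have he := zstep_ge0 (j + d).
case: d IH hee hS he => [|d] IH hee hS he.
  rewrite !addn0 in hee hS he *; rewrite vsub_self.
  have -> : vadd (fun _ : 'I_n => 0) (vsub (ztraj j.+1) (ztraj j)) = vsub (ztraj j.+1) (ztraj j).
    by apply: functional_extensionality => k; rewrite /vadd; ring.
  by rewrite hee /=; lra.
have hd : 0 < INR d.+1 by apply: lt_0_INR; lia.
have := norm2_add_le (vsub (ztraj (j + d.+1)) (ztraj j))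
          (vsub (ztraj (j + d.+1).+1) (ztraj (j + d.+1))) (Rinv_0_lt_compat _ hd).
rewrite Rinv_inv hee => h; apply: (Rle_trans _ _ _ h).
have hid : 0 < / INR d.+1 by apply: Rinv_0_lt_compat.
have : (1 + / INR d.+1) * norm2 (vsub (ztraj (j + d.+1)) (ztraj j))
       <= (1 + / INR d.+1) * (INR d.+1 * zpath (j + d.+1)) by apply: Rmult_le_compat_l; lra.
have -> : (1 + / INR d.+1) * (INR d.+1 * zpath (j + d.+1)) = (INR d.+1 + 1) * zpath (j + d.+1).
  by field; lra.
rewrite !S_INR => ?; nra.
Qed.

Lemma ztraj_dist_le j m : (j <= m)%nat -> norm2 (vsub (ztraj m) (ztraj j)) <= INR m * zpath m.
Proof.
move=> hjm; have := ztraj_dist j (m - j); rewrite subnKC // => h.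
apply: (Rle_trans _ _ _ h); apply: Rmult_le_compat_r; first exact: zpath_ge0.
by apply: le_INR; apply/leP; exact: leq_subr.
Qed.

Lemma zpath_le_decrease m : (m <= size s)%nat ->
  / (2 * gamhat gam) * zpath m <= lyap (traj 0) - lyap (traj m).
Proof.
elim: m => [|m IH] hm; first by rewrite /zpath big_ord0; lra.
have hm' : (m < size s)%nat by exact: hm.
have := IH (ltnW hm'); rewrite zpath_succ.
have := lyap_decrease (traj m) (nth set0 s m).
have : 0 <= \big[Rplus/0]_(i < N | i \in nth set0 s m)
              (alpha i * norm2 (vsub (z_of (traj m)) (traj m i))).
  by apply: sumR_ge0 => i _; apply: Rmult_le_pos; [apply: Rlt_le; exact: alpha_pos | exact: norm2_ge0].
by rewrite /zstep /ztraj -traj_succ //; lra.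
Qed.

Lemma traj_anchor m (i : 'I_N) : (m <= size s)%nat ->
  has (fun S : {set 'I_N} => i \in S) (take m s) -> exists2 j, (j < m)%nat & traj m i = ztraj j.
Proof.
elim: m => [|m IH] hm; first by rewrite take0.
have hm' : (m < size s)%nat by exact: hm.
rewrite (take_nth set0 hm') has_rcons traj_succ // /refresh.
case: (boolP (i \in nth set0 s m)) => hi /= hhas; first by exists m.
have [j hj e] := IH (ltnW hm') hhas.
by exists j; [exact: ltnW | rewrite e].
Qed.

Hypothesis Hn : (0 < n)%nat.
Hypothesis Hcov : forall i : 'I_N, has (fun S : {set 'I_N} => i \in S) s.

Lemma sweep_gap :
  lyap (traj (size s)) - phistar <=
  INR (size s) * sumI beta * (2 * gamhat gam) * (lyap (traj 0) - lyap (traj (size s))).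
Proof.
set M := size s.
have ht := zpath_le_decrease (leqnn M); have hgh := gamhat_pos.
have hSS : zpath M <= 2 * gamhat gam * (lyap (traj 0) - lyap (traj M)).
  have -> : zpath M = 2 * gamhat gam * (/ (2 * gamhat gam) * zpath M) by field; lra.
  by apply: Rmult_le_compat_l; lra.
apply: (Rle_trans _ _ _ (lyap_suboptimality (traj M))).
apply: (Rle_trans _ (sumI (fun i => beta i * (INR M * zpath M)))).
  apply: sumR_le => i _.
  have hc := Hcov i; rewrite -(take_size s) in hc.
  have [j hj ->] := traj_anchor (leqnn _) hc.
  apply: Rmult_le_compat_l; first exact: Rlt_le (beta_pos Hn i).
  by rewrite -/(ztraj M); apply: ztraj_dist_le; exact: ltnW.
rewrite /sumI sumR_scal_r -/(sumI beta).
have hb : 0 <= sumI beta by apply: sumR_ge0 => i _; exact: Rlt_le (beta_pos Hn i).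
have hM := pos_INR M.
have : sumI beta * (INR M * zpath M)
       <= sumI beta * (INR M * (2 * gamhat gam * (lyap (traj 0) - lyap (traj M)))).
  by apply: Rmult_le_compat_l => //; exact: Rmult_le_compat_l.
lra.
Qed.

End Epoch.

Lemma shuffled_hist_succ (pi : nat -> {perm 'I_N}) nu :
  shuffled_hist pi (nu.+1 * N) =
  shuffled_hist pi (nu * N) ++ [seq shuffled_set pi j | j <- iota (nu * N) N].
Proof. by rewrite /shuffled_hist mulSnr iotaD map_cat add0n. Qed.

Lemma epoch_covers (pi : nat -> {perm 'I_N}) nu (i : 'I_N) :
  has (fun S : {set 'I_N} => i \in S) [seq shuffled_set pi j | j <- iota (nu * N) N].
Proof.
apply/hasP; set j := ((pi nu)^-1)%g i.
exists (shuffled_set pi (nu * N + j)).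
  by apply: map_f; rewrite mem_iota leq_addr ltn_add2l ltn_ord.
rewrite /shuffled_set divnMDl // divn_small ?addn0 ?ltn_ord //.
rewrite modnMDl modn_small ?ltn_ord //.
have -> : i = pi nu j by rewrite /j permKV.
by apply: imset_f; rewrite inE.
Qed.

Definition delta_min := minI (fun i => gam i * mu i / INR N).
Definition Delta_max := maxI (fun i => gam i * L i / INR N).

Lemma delta_min_pos : 0 < delta_min.
Proof.
rewrite /delta_min; have [j ->] := minI_mem (fun i => gam i * mu i / INR N) idx0.
by apply: Rdiv_lt_0_compat; [exact: Rmult_lt_0_compat (gam_pos j) (Hmu_pos j) | exact: N_pos].
Qed.

Lemma Delta_max_lt1 : Delta_max < 1.
Proof.
rewrite /Delta_max; have [j ->] := maxI_mem (fun i => gam i * L i / INR N) idx0.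
have := gamL_lt_N j; have hN := N_pos.
move=> h; apply: (Rmult_lt_reg_r (INR N)) => //.
by rewrite /Rdiv Rmult_assoc Rinv_l; lra.
Qed.

Lemma delta_le_Delta (Hn : (0 < n)%nat) : delta_min <= Delta_max.
Proof.
apply: (Rle_trans _ (gam idx0 * mu idx0 / INR N)); first exact: minI_le.
apply: (Rle_trans _ (gam idx0 * L idx0 / INR N)); last exact: le_maxI.
apply: Rmult_le_compat_r; first by apply: Rlt_le; apply: Rinv_0_lt_compat; exact: N_pos.
apply: Rmult_le_compat_l; first exact: Rlt_le (gam_pos idx0).
exact: mu_le_L Hn (Hgrad idx0) (HL idx0) (Hsc idx0).
Qed.

(* beta_i <= (1/delta - 1) / (2 gam_i), summed: 2 gam_hat sum beta <= (1-delta)/delta. *)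
Lemma sum_beta_bound : 2 * gamhat gam * sumI beta <= (1 - delta_min) / delta_min.
Proof.
have hN := N_pos; have hd := delta_min_pos; have hW := invgam_sum_pos.
have hb i : beta i <= / (2 * gam i) * ((1 - delta_min) / delta_min).
  have hdi : delta_min <= gam i * mu i / INR N by apply: minI_le.
  have hg := gam_pos i; have hm := Hmu_pos i.
  have -> : beta i = / (2 * gam i) * (/ (gam i * mu i / INR N) - 1).
    by rewrite /beta; field; repeat split; lra.
  apply: Rmult_le_compat_l; first by apply: Rlt_le; apply: Rinv_0_lt_compat; lra.
  have -> : (1 - delta_min) / delta_min = / delta_min - 1 by field; lra.
  by have := Rinv_le_contravar _ _ hd hdi; lra.
have : sumI beta <= invgam_sum / 2 * ((1 - delta_min) / delta_min).
  rewrite /invgam_sum /sumI /Rdiv -!sumR_scal_r; apply: sumR_le => i _.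
  by have := hb i; have := gam_pos i => hg; rewrite /Rdiv; have -> : / (2 * gam i) = / gam i * / 2 by field; lra.
rewrite /gamhat -/invgam_sum => h.
apply: (Rle_trans _ (2 * / invgam_sum * (invgam_sum / 2 * ((1 - delta_min) / delta_min)))).
  by apply: Rmult_le_compat_l => //; apply: Rlt_le; apply: Rmult_lt_0_compat; [lra | exact: Rinv_0_lt_compat].
by apply: Req_le; field; lra.
Qed.

Definition shuffled_gap (pi : nat -> {perm 'I_N}) nu := lyap_gap (shuffled_hist pi (nu * N)).

Lemma epoch_contraction (Hn : (0 < n)%nat) (pi : nat -> {perm 'I_N}) nu :
  let c := delta_min * (1 - Delta_max) / (INR N * (2 - delta_min) ^ 2 * (1 - delta_min)) in
  0 <= c /\ c <= 1 /\ shuffled_gap pi nu.+1 <= (1 - c) * shuffled_gap pi nu.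
Proof.
move=> c.
have hN1 : 1 <= INR N by apply: (le_INR 1); apply/leP.
set s := [seq shuffled_set pi j | j <- iota (nu * N) N].
set u0 := anchors (shuffled_hist pi (nu * N)).
have hs : size s = N by rewrite size_map size_iota.
have hu : anchors (shuffled_hist pi (nu.+1 * N)) = traj u0 s N.
  by rewrite /anchors shuffled_hist_succ foldl_cat /traj take_oversize ?hs.
have hu0 : traj u0 s 0 = u0 by rewrite /traj take0.
have hsweep := sweep_gap u0 Hn (epoch_covers pi nu).
have hdec := zpath_le_decrease u0 (leqnn (size s)).
rewrite -/s -/u0 hs hu0 in hsweep hdec.
have hgh : 0 < / (2 * gamhat gam) by have := gamhat_pos => *; apply: Rinv_0_lt_compat; lra.
have hSS := zpath_ge0 u0 s N.
have [hc0 hc1] := shuffled_constant_bound hN1 delta_min_pos (delta_le_Delta Hn) Delta_max_lt1.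
rewrite -/c in hc0 hc1.
set K := INR N * (1 - delta_min) / delta_min in hc1 *.
have hd := delta_min_pos; have hD := Delta_max_lt1; have hdD := delta_le_Delta Hn.
have hK : 0 <= K by rewrite /K; apply: Rmult_le_pos; [nra | apply: Rlt_le; exact: Rinv_0_lt_compat].
have hY' := lyap_ge_phistar (traj u0 s N).
have hdecr : 0 <= lyap u0 - lyap (traj u0 s N) by nra.
have hsb := sum_beta_bound.
split => //; split; first by have := Rmult_le_pos _ _ hc0 hK; nra.
rewrite /shuffled_gap /lyap_gap hu -/u0.
apply: (contraction_of_decrease hK hc1); [lra | lra |].
apply: (Rle_trans _ _ _ hsweep).
have -> : lyap u0 - phistar - (lyap (traj u0 s N) - phistar) = lyap u0 - lyap (traj u0 s N) by ring.
apply: Rmult_le_compat_r => //.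
have := Rmult_le_compat_l _ _ _ (Rlt_le _ _ N_pos) hsb.
by rewrite /K /Rdiv; nra.
Qed.

(* The rate constant of part (a) is admissible: with
   c = min_i (xi_i p_i / gam_i) / max_i ((N - gam_i mu_i)/(gam_i^2 mu_i)),
   c beta_i <= alpha_i p_i, because xi_i p_i / gam_i = 2 alpha_i p_i and the
   denominator is max_i 2 beta_i. *)
Lemma general_rate_admissible (Hn : (0 < n)%nat) (p : 'I_N -> R) (Hp : forall i, 0 < p i) :
  let xi := fun i => (INR N - gam i * L i) / INR N in
  let c := minI (fun i => xi i * p i / gam i)
           / maxI (fun i => (INR N - gam i * mu i) / (gam i ^ 2 * mu i)) in
  0 <= c /\ forall i, c * beta i <= alpha i * p i.
Proof.
move=> xi c; have hN := N_pos.
have e1 : (fun i => xi i * p i / gam i) = (fun i => 2 * alpha i * p i).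
  by apply: functional_extensionality => i; rewrite /xi /alpha; have := gam_pos i => hg; field; lra.
have e2 : (fun i => (INR N - gam i * mu i) / (gam i ^ 2 * mu i)) = (fun i => 2 * beta i).
  apply: functional_extensionality => i; rewrite /beta.
  by have := gam_pos i; have := Hmu_pos i => hm hg; have := pow_lt _ 2 hg => hg2; field; lra.
rewrite /c e1 e2.
set m := minI (fun i => 2 * alpha i * p i); set M := maxI (fun i => 2 * beta i).
have hm : 0 < m.
  rewrite /m; have [j ->] := minI_mem (fun i => 2 * alpha i * p i) idx0.
  by have := alpha_pos j; have := Hp j; nra.
have hM : 0 < M.
  apply: (Rlt_le_trans _ (2 * beta idx0)); last exact: (le_maxI (fun i => 2 * beta i)).
  by have := beta_pos Hn idx0; lra.
split; first by apply: Rlt_le; exact: Rdiv_lt_0_compat.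
move=> i.
have h1 : m <= 2 * alpha i * p i by exact: (minI_le (fun i => 2 * alpha i * p i)).
have h2 : 2 * beta i <= M by exact: (le_maxI (fun i => 2 * beta i)).
have hb := beta_pos Hn i.
have -> : m / M * beta i = m * (beta i / M) by rewrite /Rdiv; ring.
have : beta i / M <= / 2.
  by apply: (Rmult_le_reg_r M) => //; rewrite /Rdiv Rmult_assoc Rinv_l; lra.
nra.
Qed.

Lemma tuned_rate_admissible (p : 'I_N -> R) :
  let kappa := fun i => L i / mu i in
  let w := fun i => (sqrt (kappa i) + sqrt (kappa i - 1)) ^ 2 in
  (forall i, 1 < kappa i) ->
  (forall i, gam i = INR N / mu i * (1 - sqrt (1 - / kappa i))) ->
  (forall i, p i = w i / sumI w) ->
  0 <= / sumI w /\ forall i, / sumI w * beta i <= alpha i * p i.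
Proof.
move=> kappa w hk hgam hpw.
have hw i : 0 < w i.
  rewrite /w; apply: pow_lt.
  have : 0 < sqrt (kappa i) by apply: sqrt_lt_R0; have := hk i; lra.
  by have := sqrt_pos (kappa i - 1); lra.
have hW : 0 < sumI w.
  apply: (Rlt_le_trans _ (w idx0)); first exact: hw.
  by apply: sumR_ge_term => i; exact: Rlt_le (hw i).
split=> [|i]; first by apply: Rlt_le; apply: Rinv_0_lt_compat.
have ht : beta i <= alpha i * w i.
  rewrite /beta /alpha /w (hgam i) /kappa.
  by have := hk i; rewrite /kappa => hki; exact: (tuned_weight N_pos (Hmu_pos i) hki).
rewrite (hpw i).
have -> : alpha i * (w i / sumI w) = / sumI w * (alpha i * w i) by rewrite /Rdiv; ring.
by apply: Rmult_le_compat_l => //; apply: Rlt_le; apply: Rinv_0_lt_compat.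
Qed.

(* In dimension 0 every point is the minimizer and all gaps vanish. *)
Lemma zero_dimension (hn0 : n = 0%nat) :
  D0 = 0 /\ (forall x, phiR f g x - phistar = 0) /\ (forall x y : vec n, norm2 (vsub x y) = 0).
Proof.
have hphi x : phiR f g x - phistar = 0 by rewrite /phistar (vec0_eq hn0 x xstar); ring.
split; first exact: hphi.
by split=> // x y; rewrite (vec0_eq hn0 (vsub x y) (fun _ => 0)); exact: norm2_zero.
Qed.

Lemma randomized_bounds (q : seq {set 'I_N} -> {set 'I_N} -> R) (p : 'I_N -> R) (r : R) :
  sampling_kernel q -> sampling_lower_bound q p ->
  ((0 < n)%nat -> 0 <= r /\ forall i, r * beta i <= alpha i * p i) ->
  forall k : nat,
    expect q k [::] (fun h => phiR f g (finito_z gam df prox xinit h) - phistar)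
      <= D0 * (1 - r) ^ k /\
    / 2 * expect q k [::] (fun h => norm2 (vsub (finito_z gam df prox xinit h) xstar))
      <= INR N * D0 / summu * (1 - r) ^ k.
Proof.
move=> Hq Hlb Hr k; have [hn0|hn] := posnP n.
  have [-> [hphi hnorm]] := zero_dimension hn0.
  rewrite (functional_extensionality _ _ (fun h => hphi _)).
  rewrite (functional_extensionality _ _ (fun h => hnorm _ xstar)) !expect_zero.
  by rewrite /Rdiv !Rmult_0_r !Rmult_0_l; lra.
have [hr0 hrb] := Hr hn; exact: (randomized_rate Hq Hlb hr0 hrb hn k).
Qed.

Lemma shuffled_bounds (pi : nat -> {perm 'I_N}) :
  let delta := minI (fun i => gam i * mu i / INR N) in
  let Delta := maxI (fun i => gam i * L i / INR N) in
  let c := delta * (1 - Delta) / (INR N * (2 - delta) ^ 2 * (1 - delta)) in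
  forall nu : nat,
    phiR f g (finito_z gam df prox xinit (shuffled_hist pi (nu * N))) - phistar
      <= D0 * (1 - c) ^ nu /\
    / 2 * norm2 (vsub (finito_z gam df prox xinit (shuffled_hist pi (nu * N))) xstar)
      <= INR N * D0 / summu * (1 - c) ^ nu.
Proof.
move=> delta Delta c nu; have [hn0|hn] := posnP n.
  have [-> [hphi hnorm]] := zero_dimension hn0.
  by rewrite hphi hnorm /Rdiv !Rmult_0_r !Rmult_0_l; lra.
have [hc0 [hc1 _]] : 0 <= c /\ c <= 1 /\ _ := epoch_contraction hn pi 0.
have hstep k : shuffled_gap pi k.+1 <= (1 - c) * shuffled_gap pi k.
  exact: (proj2 (proj2 (epoch_contraction hn pi k))).
have hgap : shuffled_gap pi nu <= D0 * (1 - c) ^ nu.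
  elim: nu => [|nu IH]; first by rewrite /= Rmult_1_r; exact: lyap_init_gap.
  apply: (Rle_trans _ _ _ (hstep nu)).
  have -> : D0 * (1 - c) ^ nu.+1 = (1 - c) * (D0 * (1 - c) ^ nu) by rewrite /=; ring.
  by apply: Rmult_le_compat_l; lra.
rewrite finito_z_anchors; split.
  by have := phi_le_lyap (anchors (shuffled_hist pi (nu * N))); rewrite /shuffled_gap /lyap_gap in hgap; lra.
apply: (Rle_trans _ _ _ (dist_le_lyap _)).
have -> : INR N * D0 / summu * (1 - c) ^ nu = INR N / summu * (D0 * (1 - c) ^ nu) by rewrite /Rdiv; ring.
apply: Rmult_le_compat_l => //.
by apply: Rlt_le; apply: Rdiv_lt_0_compat; [exact: N_pos | exact: summu_pos].
Qed.

End Finito.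

Theorem corollary3p3
  (n N : nat) (HN : (0 < N)%nat)
  (f : 'I_N -> vec n -> R) (df : 'I_N -> vec n -> vec n)
  (L mu : 'I_N -> R)
  (Hgrad : forall i, is_gradient (f i) (df i))
  (HL : forall i, lipschitz_map (L i) (df i))
  (Hmu_pos : forall i, 0 < mu i)
  (Hsc : forall i, strongly_convex (mu i) (f i))
  (g : vec n -> option R)
  (Hg_proper : proper_fun g) (Hg_convex : convex_ext g) (Hg_lsc : lsc_ext g)
  (xstar : vec n) (Hxstar : is_minimizer f g xstar)
  (gam : 'I_N -> R) (Hgam : forall i, 0 < gam i < INR N / L i)
  (prox : vec n -> vec n)
  (Hprox : forall u, is_prox (gamhat gam) g u (prox u))
  (xinit : vec n) (ginit : R) (Hxinit : g xinit = Some ginit) :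
  let phistar := phiR f g xstar in
  let D0 := phiR f g xinit - phistar in
  let zk := finito_z gam df prox xinit in
  let summu := sumI mu in
  (* (a) randomized sampling *)
  (forall (p : 'I_N -> R) (q : seq {set 'I_N} -> {set 'I_N} -> R),
     (forall i, 0 < p i) -> sampling_kernel q -> sampling_lower_bound q p ->
     let xi := fun i => (INR N - gam i * L i) / INR N in
     let c := minI (fun i => xi i * p i / gam i)
              / maxI (fun i => (INR N - gam i * mu i) / (gam i ^ 2 * mu i)) in
     (forall k : nat,
        expect q k [::] (fun h => phiR f g (zk h) - phistar) <= D0 * (1 - c) ^ k /\
        / 2 * expect q k [::] (fun h => norm2 (vsub (zk h) xstar))
          <= INR N * D0 / summu * (1 - c) ^ k) /\
     (let kappa := fun i => L i / mu i in
      let w := fun i => (sqrt (kappa i) + sqrt (kappa i - 1)) ^ 2 in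
      (forall i, 1 < kappa i) ->
      (forall i, gam i = INR N / mu i * (1 - sqrt (1 - / kappa i))) ->
      (forall i, p i = w i / sumI w) ->
      let c' := / sumI w in
      forall k : nat,
        expect q k [::] (fun h => phiR f g (zk h) - phistar) <= D0 * (1 - c') ^ k /\
        / 2 * expect q k [::] (fun h => norm2 (vsub (zk h) xstar))
          <= INR N * D0 / summu * (1 - c') ^ k)) /\
  (* (b) shuffled cyclic sampling *)
  (forall pi : nat -> {perm 'I_N},
     let delta := minI (fun i => gam i * mu i / INR N) in
     let Delta := maxI (fun i => gam i * L i / INR N) in
     let c := delta * (1 - Delta) / (INR N * (2 - delta) ^ 2 * (1 - delta)) in
     forall nu : nat,
       phiR f g (zk (shuffled_hist pi (nu * N))) - phistar <= D0 * (1 - c) ^ nu /\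
       / 2 * norm2 (vsub (zk (shuffled_hist pi (nu * N))) xstar)
         <= INR N * D0 / summu * (1 - c) ^ nu).
Proof.
move=> phistar D0 zk summu.
have bounds := randomized_bounds HN Hgrad HL Hmu_pos Hsc Hg_convex Hxstar Hgam Hprox Hxinit.
split.
- move=> p q hp hq hlb xi c; split.
  + apply: bounds hq hlb _ => hn.
    exact: (general_rate_admissible HN Hgrad HL Hmu_pos Hsc Hgam hn hp).
  + move=> kappa w hk hgam hpw c'; apply: bounds hq hlb _ => _.
    exact: (tuned_rate_admissible HN Hmu_pos hk hgam hpw).
- exact: (shuffled_bounds HN Hgrad HL Hmu_pos Hsc Hg_convex Hxstar Hgam Hprox Hxinit).
Qed.
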